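(* Let $G=(U,\alpha)$ and $H=(V,\beta)$ be connected graphs. Then $G$ and $H$ are weakly disjoint if and only if their transition matrices share no eigenvalue other than $1$.
   Context: A weight function on a finite set $U$ is a map $\alpha:U\times U\to\mathbb{R}$ with $\alpha\ge 0$, $\alpha(u,u')=\alpha(u',u)$, and $\sum_{u,u'\in U}\alpha(u,u')=1$; its degree function is $p(u)=\sum_{u'\in U}\alpha(u,u')$. A graph is a pair $G=(U,\alpha)$ with $U$ finite and $\alpha$ a weight function on $U$; its edge set is $E(G)=\{(u,u'):\alpha(u,u')>0\}$ (self-loops allowed). $G$ is connected if every two distinct vertices are joined by a path of edges; $G$ is fully supported if $p(u)>0$ for all $u$. For graphs $G=(U,\alpha)$, $H=(V,\beta)$ with degree functions $p,q$, a weight joining of $\alpha$ and $\beta$ is a weight function $\gamma$ on $U\times V$ whose degree function $r(u,v)=\sum_{(u',v')}\gamma((u,v),(u',v'))$ satisfies (a) $\sum_{v}r(u,v)=p(u)$ and $\sum_u r(u,v)=q(v)$ for all $u,v$, and (b) $p(u)\sum_{\tilde v\in V}\gamma((u,v),(u',\tilde v))=\alpha(u,u')r(u,v)$ and $q(v)\sum_{\tilde u\in U}\gamma((u,v),(\tilde u,v'))=\beta(v,v')r(u,v)$ for all $u,u'\in U$, $v,v'\in V$. A graph joining of $G$ and $H$ is a graph $K=(U\times V,\gamma)$ with $\gamma$ a weight joining of $\alpha,\beta$; $\mathcal{J}(G,H)$ denotes the set of these. $G$ and $H$ are weakly disjoint if every $K\in\mathcal{J}(G,H)$ has degree function equal to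 $p\otimes q$, i.e. $r(u,v)=p(u)q(v)$. The transition matrix of a fully supported graph $G=(U,\alpha)$ with $U=\{u_1,\dots,u_m\}$ is the $m\times m$ matrix with entries $\alpha(u_i,u_j)/p(u_i)$. *)

From HB Require Import structures.
From mathcomp Require Import all_boot all_order all_algebra.
From mathcomp Require Import reals.
Set Implicit Arguments. Unset Strict Implicit. Unset Printing Implicit Defensive.
Import Order.TTheory GRing.Theory Num.Theory.
Local Open Scope ring_scope.

Section GraphDefs.
Variable R : realType.

Definition is_weight (U : finType) (alpha : U -> U -> R) : Prop :=
  (forall u u', 0 <= alpha u u') /\
  (forall u u', alpha u u' = alpha u' u) /\
  (\sum_(u : U) \sum_(u' : U) alpha u u' = 1).

Definition deg (U : finType) (alpha : U -> U -> R) (u : U) : R :=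
  \sum_(u' : U) alpha u u'.

Definition edge_rel (U : finType) (alpha : U -> U -> R) : rel U :=
  fun u u' => 0 < alpha u u'.

Definition connected_graph (U : finType) (alpha : U -> U -> R) : Prop :=
  forall u u' : U, u != u' -> connect (edge_rel alpha) u u'.

Definition fully_supported (U : finType) (alpha : U -> U -> R) : Prop :=
  forall u, 0 < deg alpha u.

Definition weight_joining (U V : finType) (alpha : U -> U -> R)
  (beta : V -> V -> R) (gamma : (U * V)%type -> (U * V)%type -> R) : Prop :=
  is_weight gamma /\
  (forall u, \sum_(v : V) deg gamma (u, v) = deg alpha u) /\
  (forall v, \sum_(u : U) deg gamma (u, v) = deg beta v) /\
  (forall (u u' : U) (v : V),
      deg alpha u * (\sum_(vt : V) gamma (u, v) (u', vt))
      = alpha u u' * deg gamma (u, v)) /\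
  (forall (u : U) (v v' : V),
      deg beta v * (\sum_(ut : U) gamma (u, v) (ut, v'))
      = beta v v' * deg gamma (u, v)).

Definition weakly_disjoint (U V : finType) (alpha : U -> U -> R)
  (beta : V -> V -> R) : Prop :=
  forall gamma, weight_joining alpha beta gamma ->
    forall u v, deg gamma (u, v) = deg alpha u * deg beta v.

Definition trans_mx (U : finType) (alpha : U -> U -> R) : 'M[R]_#|U| :=
  \matrix_(i, j) (alpha (enum_val i) (enum_val j) / deg alpha (enum_val i)).

End GraphDefs.

(* Both transition operators P_alpha and P_beta are self-adjoint for the
   inner products weighted by the degree functions p and q.  Hence their
   eigenvalues are real, eigenfunctions for eigenvalues other than 1 have
   mean zero, and on a connected graph the eigenvalue 1 has only constant
   eigenfunctions.

   If l <> 1 is a common eigenvalue, with eigenfunctions f and g, perturb the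
   product weight alpha (x) beta by a small multiple of a symmetric function h
   built from f (x) g (f (x) g itself when l = -1, where f and g alternate
   along edges).  The result is still a weight joining, and its degree
   function is p (x) q (1 + e c f (x) g), which differs from p (x) q.

   Conversely, for a weight joining gamma the matrix
   D(v, u) = r(u, v) - p(u) q(v) intertwines P_alpha with the transpose of
   P_beta and annihilates constants.  If D <> 0, Cayley-Hamilton for P_beta
   over C yields a left eigenvector of P_alpha in the row space of D, for an
   eigenvalue z of P_beta.  This eigenvector is orthogonal to the constants,
   z is real, and z <> 1 because the eigenvector does not come from a
   constant eigenfunction. *)

From HB Require Import structures.
From mathcomp Require Import all_boot all_order all_algebra.
From mathcomp Require Import reals complex ring lra.
Set Implicit Arguments. Unset Strict Implicit. Unset Printing Implicit Defensive.
Import Order.TTheory GRing.Theory Num.Theory.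
Local Open Scope ring_scope.

(* [f] is an eigenfunction, with eigenvalue [l], of the transition operator
   [(P f) i = (\sum_j a i j * f j) / \sum_j a i j], stated without division. *)
Definition eigenfun (K : pzSemiRingType) (I : finType) (a : I -> I -> K)
    (l : K) (f : I -> K) :=
  forall i, \sum_j a i j * f j = l * (\sum_j a i j) * f i.

Lemma eigenfun_map (K K' : pzSemiRingType) (phi : {rmorphism K -> K'})
    (I : finType) (a : I -> I -> K) (b : I -> I -> K') l f :
  (forall i j, phi (a i j) = b i j) ->
  eigenfun a l f -> eigenfun b (phi l) (fun i => phi (f i)).
Proof.
move=> phi_ab ef i.
have -> : \sum_j b i j = phi (\sum_j a i j).
  by rewrite rmorph_sum; apply: eq_bigr => j _; rewrite phi_ab.
have -> : \sum_j b i j * phi (f j) = phi (\sum_j a i j * f j).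
  by rewrite rmorph_sum; apply: eq_bigr => j _; rewrite rmorphM phi_ab.
by rewrite ef !rmorphM.
Qed.

Section SymmetricKernel.
Variables (K : comPzRingType) (I : finType) (a : I -> I -> K).
Hypothesis a_sym : forall i j, a i j = a j i.

Lemma kernel_pairingC w w' :
  \sum_i w i * \sum_j a i j * w' j = \sum_i w' i * \sum_j a i j * w j.
Proof.
rewrite (eq_bigr (fun i => \sum_j w i * (a j i * w' j))); last first.
  by move=> i _; rewrite mulr_sumr; apply: eq_bigr => j _; rewrite a_sym.
rewrite exchange_big; apply: eq_bigr => j _; rewrite mulr_sumr.
by apply: eq_bigr => i _; ring.
Qed.

Lemma eigenfun_orthogonal z z' w w' :
  eigenfun a z w -> eigenfun a z' w' ->
  (z - z') * \sum_i (\sum_j a i j) * (w i * w' i) = 0.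
Proof.
move=> ew ew'; have := kernel_pairingC w' w.
rewrite (eq_bigr _ (fun i _ => congr1 _ (ew i))).
rewrite [RHS](eq_bigr _ (fun i _ => congr1 _ (ew' i))) => E.
apply/eqP; rewrite mulrBl subr_eq0 !mulr_sumr; apply/eqP.
transitivity (\sum_i w' i * (z * (\sum_j a i j) * w i)).
  by apply: eq_bigr => i _; ring.
by rewrite E; apply: eq_bigr => i _; ring.
Qed.

Lemma dirichlet_form_eigenfun s w w' :
  s ^+ 2 = 1 -> eigenfun a s w -> eigenfun a s w' ->
  \sum_i \sum_j a i j * ((w i - s * w j) * (w' i - s * w' j)) = 0.
Proof.
move=> s2 ew ew'; set N := \sum_i (\sum_j a i j) * (w i * w' i).
have diag_l : \sum_i \sum_j a i j * (w i * w' i) = N.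
  by apply: eq_bigr => i _; rewrite mulr_suml.
have diag_r : \sum_i \sum_j a i j * (w j * w' j) = N.
  rewrite exchange_big; apply: eq_bigr => j _; rewrite -mulr_suml.
  by congr (_ * _); apply: eq_bigr => i _; rewrite a_sym.
have cross : \sum_i w i * \sum_j a i j * w' j = s * N.
  by rewrite mulr_sumr; apply: eq_bigr => i _; rewrite ew'; ring.
transitivity (\sum_i \sum_j a i j * (w i * w' i)
  + s ^+ 2 * \sum_i \sum_j a i j * (w j * w' j)
  - s * \sum_i w i * \sum_j a i j * w' j - s * \sum_i w' i * \sum_j a i j * w j).
  rewrite !mulr_sumr -big_split -!sumrB /=; apply: eq_bigr => i _.
  by rewrite !mulr_sumr -big_split -!sumrB /=; apply: eq_bigr => j _; ring.
by rewrite (kernel_pairingC w' w) diag_l diag_r cross !mulrA -expr2 s2; ring.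
Qed.

End SymmetricKernel.

Lemma eigenfun_sum_eq0 (K : idomainType) (I : finType) (a : I -> I -> K) l f :
  (forall i j, a i j = a j i) -> l != 1 -> eigenfun a l f ->
  \sum_i (\sum_j a i j) * f i = 0.
Proof.
move=> a_sym l1 ef; have ef1 : eigenfun a 1 (fun _ => 1).
  by move=> i; rewrite mul1r mulr1; apply: eq_bigr => j _; rewrite mulr1.
move/eqP: (eigenfun_orthogonal a_sym ef ef1); rewrite mulf_eq0 subr_eq0 (negbTE l1) /=.
by under eq_bigr do rewrite mulr1; move/eqP.
Qed.

Section NonnegativeKernel.
Variables (C : numClosedFieldType) (I : finType) (a : I -> I -> C).
Hypotheses (a_ge0 : forall i j, 0 <= a i j) (a_sym : forall i j, a i j = a j i).

Let a_conj i j : (a i j)^* = a i j.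
Proof. by rewrite conj_Creal ?ger0_real. Qed.

Lemma eigenfun_conj z w : eigenfun a z w -> eigenfun a z^* (fun i => (w i)^*).
Proof. exact: (eigenfun_map (phi := Num.conj) a_conj). Qed.

Lemma eigenfun_edge s w : s ^+ 2 = 1 -> eigenfun a s w ->
  forall i j, 0 < a i j -> w i = s * w j.
Proof.
move=> s2 ew i j aij_gt0.
have s_conj : s^* = s.
  by move/eqP: s2; rewrite sqrf_eq1 => /orP[] /eqP->; rewrite ?rmorphN rmorph1.
have ew' := eigenfun_conj ew; rewrite s_conj in ew'.
have conj_diff k l : (w k - s * w l)^* = (w k)^* - s * (w l)^*.
  by rewrite rmorphB rmorphM /= s_conj.
have term_ge0 k l : 0 <= a k l * ((w k - s * w l) * ((w k)^* - s * (w l)^*)).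
  by rewrite mulr_ge0 // -conj_diff mul_conjC_ge0.
have := dirichlet_form_eigenfun a_sym s2 ew ew'.
move=> /(psumr_eq0P (fun k _ => sumr_ge0 _ (fun l _ => term_ge0 k l))) /(_ i isT).
move=> /(psumr_eq0P (fun l _ => term_ge0 i l)) /(_ j isT) /eqP.
rewrite mulf_eq0 gt_eqF //= -conj_diff mul_conjC_eq0 subr_eq0.
by move/eqP.
Qed.

Lemma eigenfun_real z w : (forall i, 0 < \sum_j a i j) -> (exists i, w i != 0) ->
  eigenfun a z w -> z \is Num.real.
Proof.
move=> p_gt0 [i0 wi0] ew.
have term_ge0 i : 0 <= (\sum_j a i j) * (w i * (w i)^*).
  exact: mulr_ge0 (ltW (p_gt0 i)) (mul_conjC_ge0 _).
have N_neq0 : \sum_i (\sum_j a i j) * (w i * (w i)^*) != 0.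
  rewrite psumr_neq0 //; apply/hasP; exists i0; first by rewrite mem_index_enum.
  by rewrite mulr_gt0 // mul_conjC_gt0.
have := eigenfun_orthogonal a_sym ew (eigenfun_conj ew).
by move/eqP; rewrite mulf_eq0 (negbTE N_neq0) orbF subr_eq0 CrealE eq_sym.
Qed.

End NonnegativeKernel.

Lemma eigenvalue_trmx (K : fieldType) n (A : 'M[K]_n) z :
  eigenvalue A^T z = eigenvalue A z.
Proof.
rewrite !eigenvalue_root_char /char_poly -det_tr; congr (root (\det _) z).
by apply/matrixP => i j; rewrite !mxE eq_sym.
Qed.

Lemma intertwine_prod_sub_scalar (K : comPzRingType) m n (A : 'M[K]_m)
    (B : 'M[K]_n) (X : 'M[K]_(n, m)) (s : seq K) :
  X *m A = B *m X ->
  X *m \prod_(z <- s) (A - z%:M) = \prod_(z <- s) (B - z%:M) *m X.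
Proof.
move=> XA; elim: s => [|z s IH]; first by rewrite !big_nil mulmx1 mul1mx.
have XAz : X *m (A - z%:M) = (B - z%:M) *m X.
  by rewrite mulmxBr XA scalar_mxC mulmxBl.
by rewrite !big_cons -!mulmxE mulmxA XAz -!mulmxA IH.
Qed.

Lemma stable_eigenvector (K : fieldType) m k (A : 'M[K]_m) (W : 'M[K]_(k, m))
    (s : seq K) j (Y : 'M[K]_(j, m)) :
  stablemx W A -> (Y <= W)%MS -> Y != 0 -> Y *m \prod_(z <- s) (A - z%:M) = 0 ->
  exists2 z, z \in s & exists2 y : 'rV_m, y != 0 & (y <= W)%MS /\ y *m A = z *: y.
Proof.
move=> WA; elim: s j Y => [|z s IH] j Y YW Y_neq0; rewrite ?big_nil ?big_cons.
  by rewrite mulmx1 => Y0; rewrite Y0 eqxx in Y_neq0.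
rewrite -mulmxE mulmxA.
have [YA0 _ | YA_neq0 /(IH _ _ _ YA_neq0)] := eqVneq (Y *m (A - z%:M)) 0.
  exists z; first by rewrite mem_head.
  exists (nz_row Y); first by rewrite nz_row_eq0.
  split; first exact: submx_trans (nz_row_sub Y) YW.
  have [D ->] := submxP (nz_row_sub Y).
  by apply/eqP; rewrite -subr_eq0 -mul_mx_scalar -mulmxBr -!mulmxA YA0 mulmx0.
case.
  by apply: submx_trans (submxMr _ YW) _; rewrite stablemxD ?stablemxN ?stablemxC.
by move=> z' z's yz; exists z' => //; rewrite in_cons z's orbT.
Qed.

Lemma intertwiner_eigenvector (K : closedFieldType) m n (A : 'M[K]_m)
    (B : 'M[K]_n) (X : 'M[K]_(n, m)) :
  X *m A = B *m X -> X != 0 ->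
  exists2 z, eigenvalue B z &
    exists2 y : 'rV_m, y != 0 & (y <= X)%MS /\ y *m A = z *: y.
Proof.
case: n B X => [|n] B X XA X_neq0; first by case/negP: X_neq0; rewrite [X]flatmx0.
have [s charB] := closed_field_poly_normal (char_poly B).
rewrite (monicP (char_poly_monic B)) scale1r in charB.
have charB0 : \prod_(z <- s) (B - z%:M) = 0.
  rewrite -(Cayley_Hamilton B) charB rmorph_prod.
  by apply: eq_bigr => z _; rewrite rmorphB /= horner_mx_X horner_mx_C.
have XP0 : X *m \prod_(z <- s) (A - z%:M) = 0.
  by rewrite (intertwine_prod_sub_scalar s XA) charB0 mul0mx.
have X_stable : stablemx X A by rewrite XA submxMl.
have [z zs yz] := stable_eigenvector X_stable (submx_refl X) X_neq0 XP0.
by exists z => //; rewrite eigenvalue_root_char charB root_prod_XsubC.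
Qed.

Lemma sum_enum_val (M : nmodType) (T : finType) (F : T -> M) :
  \sum_(i < #|T|) F (enum_val i) = \sum_t F t.
Proof. by rewrite -(big_enum_val (A := T)). Qed.

Lemma sum_pair (M : nmodType) (T T' : finType) (F : T * T' -> M) :
  \sum_x F x = \sum_t \sum_t' F (t, t').
Proof. by rewrite pair_big; apply: eq_bigr => -[]. Qed.

Lemma exists_small_scale (R : realFieldType) (T : finType) (F : T -> R) :
  exists2 e, 0 < e & forall t, 0 <= 1 + e * F t.
Proof.
pose S := \sum_t `|F t|.
have S_ge0 : 0 <= S by apply: sumr_ge0 => t _.
exists (1 + S)^-1 => [|t]; first by rewrite invr_gt0; lra.
have : `|F t| <= S by rewrite /S (bigD1 t) //= lerDl sumr_ge0.
rewrite ler_norml => /andP[FtS _].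
have -> : 1 + (1 + S)^-1 * F t = (1 + S + F t) / (1 + S) by field; lra.
by rewrite divr_ge0; lra.
Qed.

Section Graph.
Variables (R : realType) (U : finType) (alpha : U -> U -> R).
Hypotheses (alpha_weight : is_weight alpha) (alpha_conn : connected_graph alpha).
Local Notation toC := (real_complex R).

Let alpha_ge0 : forall u u', 0 <= alpha u u' := alpha_weight.1.
Let alpha_sym : forall u u', alpha u u' = alpha u' u := alpha_weight.2.1.

Lemma connected_const (T : Type) (f : U -> T) :
  (forall u u', 0 < alpha u u' -> f u = f u') -> forall u u', f u = f u'.
Proof.
move=> f_edge u u'; have [->|neq] := eqVneq u u'; first by [].
have /connectP[p pth ->] := alpha_conn neq.
elim: p u pth {neq} => [|x p IH] u //= /andP[ux pth].
by rewrite (f_edge u x ux) (IH x pth).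
Qed.

Lemma deg_gt0 u : 0 < deg alpha u.
Proof.
have deg_ge0 v : 0 <= deg alpha v by apply: sumr_ge0.
rewrite lt_def deg_ge0 andbT; apply/eqP => deg0.
have [v degv] : exists v, deg alpha v != 0.
  apply/existsP; apply: contraT; rewrite negb_exists => /forallP deg_eq0.
  move: alpha_weight.2.2; rewrite big1 => [/eqP|v _]; first by rewrite eq_sym oner_eq0.
  exact/eqP/negPn/deg_eq0.
have uv : u != v by apply: contraNneq degv => <-; rewrite deg0.
have /connectP[[|x p] /= pth vE] := alpha_conn uv; first by rewrite vE eqxx in uv.
move: pth => /andP[ux _]; move: ux; rewrite /edge_rel.
by rewrite (psumr_eq0P (fun u' _ => alpha_ge0 u u') deg0) ?ltxx.
Qed.

Lemma trans_mx_eigenfun l : eigenvalue (trans_mx alpha) l ->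
  exists2 f : U -> R, (exists u, f u != 0) & eigenfun alpha l f.
Proof.
rewrite -eigenvalue_trmx => /eigenvalueP[y yT y_neq0].
exists (fun u => y 0 (enum_rank u)).
  by case/rV0Pn: y_neq0 => i yi; exists (enum_val i); rewrite enum_valK.
move=> u; have := congr1 (fun r : 'rV_#|U| => r 0 (enum_rank u)) yT.
rewrite !mxE => E; rewrite mulrAC -E mulr_suml -(sum_enum_val (T := U)).
apply: eq_bigr => i _; rewrite !mxE enum_rankK enum_valK -/(deg alpha u).
by field; apply: lt0r_neq0 (deg_gt0 u).
Qed.

Let alphaC u u' := toC (alpha u u').
Let alphaC_ge0 u u' : 0 <= alphaC u u'. Proof. by rewrite ler0c. Qed.
Let alphaC_sym u u' : alphaC u u' = alphaC u' u. Proof. by rewrite /alphaC alpha_sym. Qed.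
Let alphaC_deg u : \sum_u' alphaC u u' = toC (deg alpha u).
Proof. by rewrite rmorph_sum. Qed.

Lemma eigenfun_alternating f : eigenfun alpha (-1) f ->
  forall u u', 0 < alpha u u' -> f u = - f u'.
Proof.
move=> /(eigenfun_map (phi := toC) (b := alphaC) (fun _ _ => erefl)) ef u u' uu'.
have sq1 : toC (-1) ^+ 2 = 1 by rewrite rmorphN1 sqrrN expr1n.
have := eigenfun_edge alphaC_ge0 alphaC_sym sq1 ef (_ : 0 < alphaC u u').
by rewrite -rmorphM mulN1r ltcR => /(_ uu') /complexI.
Qed.

Lemma harmonic_const (w : U -> R[i]) :
  eigenfun alphaC 1 w -> forall u u', w u = w u'.
Proof.
move=> ew; apply: connected_const => u u' uu'.
have := eigenfun_edge alphaC_ge0 alphaC_sym (expr1n _ 2) ew (_ : 0 < alphaC u u').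
by rewrite mul1r ltcR => /(_ uu').
Qed.

Lemma left_eigenvector_eigenfun (y : 'rV[R[i]]_#|U|) z :
  y *m map_mx toC (trans_mx alpha) = z *: y ->
  eigenfun alphaC z (fun u => y 0 (enum_rank u) / toC (deg alpha u)).
Proof.
move=> yT u; have := congr1 (fun r : 'rV_#|U| => r 0 (enum_rank u)) yT.
rewrite !mxE alphaC_deg => E.
have degC_neq0 v : toC (deg alpha v) != 0 by rewrite lt0r_neq0 ?ltcR ?deg_gt0.
rewrite mulrAC -mulrA divfK // -E -(sum_enum_val (T := U)).
apply: eq_bigr => i _; rewrite !mxE enum_rankK enum_valK fmorph_div /alphaC alpha_sym.
by rewrite mulrCA mulrA.
Qed.

Lemma trans_mx_left_eigenvector (y : 'rV[R[i]]_#|U|) z :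
  y != 0 -> y *m map_mx toC (trans_mx alpha) = z *: y ->
  y *m (const_mx 1 : 'cV_#|U|) = 0 ->
  exists2 l, l != 1 & z = toC l.
Proof.
move=> y_neq0 yT y1; have ew := left_eigenvector_eigenfun yT.
set w := fun u => _ in ew.
have degC_neq0 u : toC (deg alpha u) != 0 by rewrite lt0r_neq0 ?ltcR ?deg_gt0.
have w_neq0 : exists u, w u != 0.
  case/rV0Pn: y_neq0 => i yi; exists (enum_val i).
  by rewrite /w enum_valK mulf_neq0 ?invr_neq0.
have sum_w : \sum_u toC (deg alpha u) * w u = 0.
  transitivity ((y *m (const_mx 1 : 'cV_#|U|)) 0 0); last by rewrite y1 mxE.
  rewrite -(sum_enum_val (T := U)) !mxE.
  by apply: eq_bigr => i _; rewrite /w mulrC divfK // mxE enum_valK mulr1.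
have degC_gt0 u : 0 < \sum_u' alphaC u u' by rewrite alphaC_deg ltcR deg_gt0.
have /complex_realP[l zl] := eigenfun_real alphaC_ge0 alphaC_sym degC_gt0 w_neq0 ew.
exists l => //; apply/eqP => l1.
rewrite zl l1 rmorph1 in ew; have [u0 wu0] := w_neq0; move: sum_w.
rewrite (eq_bigr _ (fun u _ => congr1 _ (harmonic_const ew u u0))) -mulr_suml.
by rewrite -rmorph_sum alpha_weight.2.2 rmorph1 mul1r => /eqP; rewrite (negbTE wu0).
Qed.

End Graph.

Section Joinings.
Variables (R : realType) (U V : finType) (alpha : U -> U -> R) (beta : V -> V -> R).
Hypotheses (alpha_weight : is_weight alpha) (beta_weight : is_weight beta).
Hypotheses (alpha_conn : connected_graph alpha) (beta_conn : connected_graph beta).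
Local Notation toC := (real_complex R).

Let alpha_sym : forall u u', alpha u u' = alpha u' u := alpha_weight.2.1.
Let beta_sym : forall v v', beta v v' = beta v' v := beta_weight.2.1.
Let deg_alpha_neq0 u : deg alpha u != 0 := lt0r_neq0 (deg_gt0 alpha_weight alpha_conn u).
Let deg_beta_neq0 v : deg beta v != 0 := lt0r_neq0 (deg_gt0 beta_weight beta_conn v).

Definition product_perturbation (e : R) (h : U * V -> U * V -> R) x y :=
  alpha x.1 y.1 * beta x.2 y.2 * (1 + e * h x y).

Section Perturbation.
Variables (h : U * V -> U * V -> R) (phi : U * V -> R).
Hypotheses
  (h_sym : forall x y,
     alpha x.1 y.1 * beta x.2 y.2 * h x y = alpha y.1 x.1 * beta y.2 x.2 * h y x)
  (h_sumV : forall u u' v,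
     \sum_v' beta v v' * h (u, v) (u', v') = deg beta v * phi (u, v))
  (h_sumU : forall u v v',
     \sum_u' alpha u u' * h (u, v) (u', v') = deg alpha u * phi (u, v))
  (phi_sumV : forall u, \sum_v deg beta v * phi (u, v) = 0)
  (phi_sumU : forall v, \sum_u deg alpha u * phi (u, v) = 0).

Lemma perturbation_sumV e u u' v :
  \sum_v' product_perturbation e h (u, v) (u', v')
  = alpha u u' * deg beta v * (1 + e * phi (u, v)).
Proof.
rewrite (eq_bigr (fun v' => alpha u u' * beta v v'
    + alpha u u' * e * (beta v v' * h (u, v) (u', v')))) => [|v' _]; last first.
  by rewrite /product_perturbation /=; ring.
by rewrite big_split /= -!mulr_sumr -/(deg beta v) h_sumV; ring.
Qed.

Lemma perturbation_sumU e u v v' :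
  \sum_u' product_perturbation e h (u, v) (u', v')
  = beta v v' * deg alpha u * (1 + e * phi (u, v)).
Proof.
rewrite (eq_bigr (fun u' => beta v v' * alpha u u'
    + beta v v' * e * (alpha u u' * h (u, v) (u', v')))) => [|u' _]; last first.
  by rewrite /product_perturbation /=; ring.
by rewrite big_split /= -!mulr_sumr -/(deg alpha u) h_sumU; ring.
Qed.

Lemma deg_perturbation e u v :
  deg (product_perturbation e h) (u, v)
  = deg alpha u * deg beta v * (1 + e * phi (u, v)).
Proof.
by rewrite /deg sum_pair (eq_bigr _ (fun u' _ => perturbation_sumV e u u' v)) -!mulr_suml.
Qed.

Lemma perturbation_joining e : (forall x y, 0 <= 1 + e * h x y) ->
  weight_joining alpha beta (product_perturbation e h).
Proof.
move=> h_ge0; have [alpha_ge0 [_ alpha1]] := alpha_weight.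
have [beta_ge0 [_ beta1]] := beta_weight.
have sum_degV u : \sum_v deg (product_perturbation e h) (u, v) = deg alpha u.
  transitivity (deg alpha u * (\sum_v deg beta v + e * \sum_v deg beta v * phi (u, v))).
    rewrite mulr_sumr -big_split mulr_sumr; apply: eq_bigr => v _ /=.
    by rewrite deg_perturbation; ring.
  by rewrite phi_sumV beta1 mulr0 addr0 mulr1.
have sum_degU v : \sum_u deg (product_perturbation e h) (u, v) = deg beta v.
  transitivity (deg beta v * (\sum_u deg alpha u + e * \sum_u deg alpha u * phi (u, v))).
    rewrite mulr_sumr -big_split mulr_sumr; apply: eq_bigr => u _ /=.
    by rewrite deg_perturbation; ring.
  by rewrite phi_sumU alpha1 mulr0 addr0 mulr1.
split; [split; [|split] | split; [|split; [|split]]] => //.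
- by move=> x y; rewrite !mulr_ge0.
- move=> x y; rewrite /product_perturbation mulrDr mulr1 (mulrCA _ e) h_sym.
  by rewrite (alpha_sym x.1) (beta_sym x.2); ring.
- by rewrite sum_pair -alpha1; apply: eq_bigr => u _; exact: sum_degV.
- by move=> u u' v; rewrite perturbation_sumV deg_perturbation; ring.
- by move=> u v v'; rewrite perturbation_sumU deg_perturbation; ring.
Qed.

Lemma perturbation_not_weakly_disjoint u v :
  deg alpha u * deg beta v * phi (u, v) != 0 -> ~ weakly_disjoint alpha beta.
Proof.
move=> phi_neq0 wd.
have [e e_gt0 h_ge0] := exists_small_scale (fun xy : (U * V) * (U * V) => h xy.1 xy.2).
have J := perturbation_joining (fun x y => h_ge0 (x, y)).
move/eqP: (wd _ J u v); rewrite deg_perturbation -subr_eq0.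
have -> : deg alpha u * deg beta v * (1 + e * phi (u, v)) - deg alpha u * deg beta v
    = e * (deg alpha u * deg beta v * phi (u, v)) by ring.
by rewrite mulf_eq0 (negbTE phi_neq0) gt_eqF.
Qed.

End Perturbation.

Lemma product_joining : exists2 gamma, weight_joining alpha beta gamma &
  forall u v, deg gamma (u, v) = deg alpha u * deg beta v.
Proof.
pose h0 : U * V -> U * V -> R := fun _ _ => 0; pose phi0 : U * V -> R := fun _ => 0.
have h0_sumV u u' v : \sum_v' beta v v' * h0 (u, v) (u', v') = deg beta v * phi0 (u, v).
  by rewrite big1 ?mulr0 // => v' _; rewrite mulr0.
have h0_sumU u v v' : \sum_u' alpha u u' * h0 (u, v) (u', v') = deg alpha u * phi0 (u, v).
  by rewrite big1 ?mulr0 // => u' _; rewrite mulr0.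
exists (product_perturbation 0 h0).
  apply: (perturbation_joining _ h0_sumV h0_sumU).
  - by move=> x y; rewrite /h0 !mulr0.
  - by move=> u; rewrite big1 // => v _; rewrite mulr0.
  - by move=> v; rewrite big1 // => u _; rewrite mulr0.
  - by move=> x y; rewrite mulr0 addr0 ler01.
by move=> u v; rewrite (deg_perturbation h0_sumV) mulr0 addr0 mulr1.
Qed.

Definition deg_mx (gamma : U * V -> U * V -> R) : 'M[R]_(#|V|, #|U|) :=
  \matrix_(k, i) deg gamma (enum_val i, enum_val k).

Lemma deg_mx_intertwine gamma : weight_joining alpha beta gamma ->
  deg_mx gamma *m trans_mx alpha = (trans_mx beta)^T *m deg_mx gamma.
Proof.
move=> [[_ [gamma_sym _]] [_ [_ [sumV_deg sumU_deg]]]].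
apply/matrixP => k j; rewrite !mxE.
set u' := enum_val j; set v := enum_val k.
transitivity (\sum_u \sum_v' gamma (u, v) (u', v')).
  rewrite -(sum_enum_val (T := U)); apply: eq_bigr => i _; rewrite !mxE.
  apply: (mulfI (deg_alpha_neq0 (enum_val i))); rewrite sumV_deg; field.
  exact: deg_alpha_neq0.
transitivity (\sum_v' \sum_u gamma (u', v') (u, v)).
  by rewrite exchange_big; apply: eq_bigr => v' _; apply: eq_bigr => u _.
rewrite -(sum_enum_val (T := V)); apply: eq_bigr => i _; rewrite !mxE.
apply: (mulfI (deg_beta_neq0 (enum_val i))); rewrite sumU_deg beta_sym; field.
exact: deg_beta_neq0.
Qed.

Lemma deg_mx_col_sum gamma : weight_joining alpha beta gamma ->
  deg_mx gamma *m const_mx 1 = \col_k deg beta (enum_val k).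
Proof.
move=> [_ [_ [sum_degU _]]]; apply/matrixP => k l; rewrite !mxE.
under eq_bigr do rewrite !mxE mulr1.
by rewrite (sum_enum_val (fun u => deg gamma (u, enum_val k))) sum_degU.
Qed.

Lemma intertwiner_common_eigenvalue (X : 'M[R]_(#|V|, #|U|)) :
  X != 0 -> X *m trans_mx alpha = (trans_mx beta)^T *m X ->
  X *m (const_mx 1 : 'cV_#|U|) = 0 ->
  exists2 l, l != 1 & eigenvalue (trans_mx alpha) l /\ eigenvalue (trans_mx beta) l.
Proof.
move=> X_neq0 XA X1.
have XAC : map_mx toC X *m map_mx toC (trans_mx alpha)
    = map_mx toC (trans_mx beta)^T *m map_mx toC X by rewrite -!map_mxM XA.
have XC_neq0 : map_mx toC X != 0 by rewrite map_mx_eq0.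
have [z Bz [y y_neq0 [yX yA]]] := intertwiner_eigenvector XAC XC_neq0.
have y1 : y *m (const_mx 1 : 'cV_#|U|) = 0.
  have [D ->] := submxP yX.
  by rewrite -mulmxA -(rmorph1 toC) -map_const_mx -map_mxM X1 map_mx0 mulmx0.
have [l l1 zl] := trans_mx_left_eigenvector alpha_weight alpha_conn y_neq0 yA y1.
exists l => //; rewrite zl in Bz yA; split.
  by rewrite -(eigenvalue_map toC); apply/eigenvalueP; exists y.
by rewrite -eigenvalue_trmx -(eigenvalue_map toC).
Qed.

Lemma joining_common_eigenvalue gamma u v : weight_joining alpha beta gamma ->
  deg gamma (u, v) != deg alpha u * deg beta v ->
  exists2 l, l != 1 & eigenvalue (trans_mx alpha) l /\ eigenvalue (trans_mx beta) l.
Proof.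
move=> J deg_neq; have [gamma0 J0 deg0] := product_joining.
pose X := deg_mx gamma - deg_mx gamma0.
apply: (@intertwiner_common_eigenvalue X).
- apply/matrix0Pn; exists (enum_rank v), (enum_rank u).
  by rewrite !mxE !enum_rankK deg0 subr_eq0.
- by rewrite mulmxBl mulmxBr !deg_mx_intertwine.
- by rewrite mulmxBl !deg_mx_col_sum // subrr.
Qed.

Section CommonEigenvalue.
Variables (l : R) (f : U -> R) (g : V -> R) (u0 : U) (v0 : V).
Hypotheses (l_neq1 : l != 1) (ef : eigenfun alpha l f) (eg : eigenfun beta l g).
Hypotheses (fu0 : f u0 != 0) (gv0 : g v0 != 0).

Let perturbation_along c h :
  c != 0 ->
  (forall x y, alpha x.1 y.1 * beta x.2 y.2 * h x y
               = alpha y.1 x.1 * beta y.2 x.2 * h y x) ->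
  (forall u u' v, \sum_v' beta v v' * h (u, v) (u', v')
                  = deg beta v * (c * (f u * g v))) ->
  (forall u v v', \sum_u' alpha u u' * h (u, v) (u', v')
                  = deg alpha u * (c * (f u * g v))) ->
  ~ weakly_disjoint alpha beta.
Proof.
move=> c_neq0 h_sym h_sumV h_sumU.
apply: (@perturbation_not_weakly_disjoint h (fun x => c * (f x.1 * g x.2))
  h_sym h_sumV h_sumU _ _ u0 v0).
- move=> u; transitivity (c * f u * \sum_v deg beta v * g v).
    by rewrite mulr_sumr; apply: eq_bigr => v _; ring.
  by rewrite (eigenfun_sum_eq0 beta_sym l_neq1 eg) mulr0.
- move=> v; transitivity (c * g v * \sum_u deg alpha u * f u).
    by rewrite mulr_sumr; apply: eq_bigr => u _; ring.
  by rewrite (eigenfun_sum_eq0 alpha_sym l_neq1 ef) mulr0.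
- by rewrite !mulf_neq0.
Qed.

Lemma eigenfun_not_weakly_disjoint : ~ weakly_disjoint alpha beta.
Proof.
have [lN1|lN1] := eqVneq l (-1).
  (* The factor [1 - l ^+ 2] used below vanishes; instead [f (x) g] is itself
     symmetric on edges, since [f] and [g] alternate along them. *)
  apply: (@perturbation_along 1 (fun x _ => f x.1 * g x.2)).
  - exact: oner_neq0.
  - move=> [x1 x2] [y1 y2] /=; rewrite (alpha_sym y1) (beta_sym y2).
    have [a0|a_neq0] := eqVneq (alpha x1 y1) 0; first by rewrite a0 !mul0r.
    have [b0|b_neq0] := eqVneq (beta x2 y2) 0; first by rewrite b0 mulr0 !mul0r.
    have efN : eigenfun alpha (-1) f by rewrite -lN1.
    have egN : eigenfun beta (-1) g by rewrite -lN1.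
    rewrite (eigenfun_alternating alpha_weight efN (_ : 0 < alpha x1 y1)); last first.
      by rewrite lt0r a_neq0 alpha_weight.1.
    rewrite (eigenfun_alternating beta_weight egN (_ : 0 < beta x2 y2)) ?mulrNN //.
    by rewrite lt0r b_neq0 beta_weight.1.
  - by move=> u u' v; rewrite -mulr_suml mul1r.
  - by move=> u v v'; rewrite -mulr_suml mul1r.
apply: (@perturbation_along (1 - l ^+ 2)
  (fun x y => f x.1 * g x.2 + f y.1 * g y.2 - l * (f x.1 * g y.2 + f y.1 * g x.2))).
- by rewrite subr_eq0 eq_sym sqrf_eq1 negb_or l_neq1.
- by move=> x y; rewrite (alpha_sym x.1) (beta_sym x.2); ring.
- move=> u u' v /=.
  transitivity (\sum_v' (beta v v' * (f u * g v - l * f u' * g v)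
                         + (f u' - l * f u) * (beta v v' * g v'))).
    by apply: eq_bigr => v' _; ring.
  by rewrite big_split /= -mulr_suml -mulr_sumr eg -/(deg beta v); ring.
- move=> u v v' /=.
  transitivity (\sum_u' (alpha u u' * (f u * g v - l * f u * g v')
                         + (g v' - l * g v) * (alpha u u' * f u'))).
    by apply: eq_bigr => u' _; ring.
  by rewrite big_split /= -mulr_suml -mulr_sumr ef -/(deg alpha u); ring.
Qed.

End CommonEigenvalue.

Lemma common_eigenvalue_not_weakly_disjoint l : l != 1 ->
  eigenvalue (trans_mx alpha) l -> eigenvalue (trans_mx beta) l ->
  ~ weakly_disjoint alpha beta.
Proof.
move=> l_neq1 /(trans_mx_eigenfun alpha_weight alpha_conn)[f [u fu] ef].
move=> /(trans_mx_eigenfun beta_weight beta_conn)[g [v gv] eg].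
exact: eigenfun_not_weakly_disjoint l_neq1 ef eg fu gv.
Qed.

End Joinings.

Theorem theorem5p2 (R : realType) (U V : finType)
  (alpha : U -> U -> R) (beta : V -> V -> R)
  (halpha : is_weight alpha) (hbeta : is_weight beta)
  (hG : connected_graph alpha) (hH : connected_graph beta) :
  weakly_disjoint alpha beta <->
  (forall a : R, eigenvalue (trans_mx alpha) a ->
                 eigenvalue (trans_mx beta) a -> a = 1).
Proof.
split=> [wd l el el' | no_common gamma J u v].
  apply/eqP; apply: contraT => l_neq1.
  by have := common_eigenvalue_not_weakly_disjoint halpha hbeta hG hH l_neq1 el el' wd.
apply/eqP; apply: contraT => deg_neq.
have [l l_neq1 [el el']] := joining_common_eigenvalue halpha hbeta hG hH J deg_neq.
by rewrite (no_common l el el') eqxx in l_neq1.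
Qed.
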